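(* Let $\mathcal{S}:\mathbb{Z}\to\{L,R\}$ be a periodic symbol sequence of period $n$ with $\mathcal{S}_0=L$, and suppose $\mathcal{S}^{\overline0\,\overline\alpha\,(d)}=\mathcal{S}$ for some $1\le\alpha\le n-1$ and $1\le d\le n-1$ with $\gcd(d,n)=1$. Let $m$ denote the multiplicative inverse of $d$ modulo $n$, and $\ell=m\alpha\bmod n$. Then $\mathcal{S}=\mathcal{F}[\ell,m,n]$ and $\alpha=\ell d\bmod n$.
   Context: For a sequence $\mathcal{S}$ of period $n$: $\mathcal{S}^{\overline j}$ is the sequence differing from $\mathcal{S}$ exactly at indices $\equiv j\pmod n$, and $\mathcal{S}^{(j)}$ is the $j$-th left shift, $\mathcal{S}^{(j)}_i=\mathcal{S}_{i+j}$; superscript operations are applied left to right (so $\mathcal{S}^{\overline0\,\overline\alpha\,(d)}$ is the $d$-th left shift of the sequence obtained from $\mathcal{S}$ by changing the symbols at indices $\equiv0$ and $\equiv\alpha$). For positive integers $\ell<n$, $m<n$, $\gcd(m,n)=1$, $\mathcal{F}[\ell,m,n]_i=L$ if $im\bmod n<\ell$ and $R$ otherwise. *)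

From mathcomp Require Import all_boot all_order all_algebra.
Set Implicit Arguments. Unset Strict Implicit. Unset Printing Implicit Defensive.
Import Order.TTheory GRing.Theory Num.Theory.
Local Open Scope ring_scope.

Inductive sym := L | R.

Definition sym_flip (s : sym) : sym := if s is L then R else L.

Definition symseq := int -> sym.

Definition periodic (n : nat) (S : symseq) : Prop :=
  forall i : int, S (i + n%:Z) = S i.

Definition flip_at (n : nat) (j : int) (S : symseq) : symseq :=
  fun i => if ((i - j) %% n%:Z)%Z == 0 then sym_flip (S i) else S i.

Definition seq_lshift (j : int) (S : symseq) : symseq := fun i => S (i + j).

Definition Fseq (l m n : nat) : symseq :=
  fun i => if ((i * m%:Z) %% n%:Z)%Z < l%:Z then L else R.

(** Unfolding the fixed-point equation at [i = k d] shows that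
    [S_{(k+1)d}] is [S_{kd}], flipped exactly when [(k+1)d] is congruent to
    [0] or to [alpha] modulo [n].  Since [m] inverts [d], for [0 < k < n]
    the residue [k d] is never [0] and equals [alpha] only for
    [k = l = m alpha mod n]; so along the orbit [0, d, 2d, ...] the sequence
    reads [L] before index [l] and [R] from [l] on.  The orbit covers every
    residue, [i] being its [(i m mod n)]-th element, which is [F[l,m,n]]. *)
From mathcomp Require Import all_boot all_order all_algebra zify.
From Stdlib Require Import FunctionalExtensionality.
Set Implicit Arguments. Unset Strict Implicit.
Import Order.TTheory GRing.Theory Num.Theory.
Local Open Scope ring_scope.

Lemma eqn_modMr_inv (n d m k y : nat) : ((d * m) %% n = 1)%N -> (k < n)%N ->
  (k * d == y %[mod n])%N = (k == y * m %% n)%N.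
Proof.
move=> dm kn; apply/eqP/eqP => [kd_y | ->].
  rewrite -(modn_small kn) -[k]muln1 -dm modnMmr mulnA -modnMml kd_y.
  by rewrite modnMml.
by rewrite modnMml -mulnA [(m * d)%N]mulnC -modnMmr dm muln1.
Qed.

Lemma flip_at_natE (n a x : nat) (S : symseq) :
  flip_at n a S x = if (x == a %[mod n])%N then sym_flip (S x) else S x.
Proof.
rewrite /flip_at; congr (if _ then _ else _); apply/eqP/eqP => [| xa].
  by move/dvdz_mod0P; rewrite -eqz_mod_dvd !modz_nat => /eqP [].
by apply/dvdz_mod0P; rewrite -eqz_mod_dvd !modz_nat xa.
Qed.

Lemma periodic_modz (n : nat) (S : symseq) :
  periodic n S -> forall i, S i = S (i %% n%:Z)%Z.
Proof.
move=> Sper.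
have Sper_mul (k : nat) x : S (x + k%:Z * n%:Z) = S x.
  elim: k x => [|k IHk] x; first by rewrite mul0r addr0.
  by rewrite -[RHS]IHk -[RHS]Sper; congr S; lia.
move=> i; rewrite {1}(divz_eq i n); case: (i %/ n)%Z => k.
  by rewrite addrC Sper_mul.
by rewrite -(Sper_mul k.+1); congr S; rewrite NegzE; lia.
Qed.

Section FixedPoint.

Variables (n : nat) (S : symseq) (alpha d m : nat).
Hypotheses (S0 : S 0 = L) (alpha_gt0 : (0 < alpha)%N) (alpha_ltn : (alpha < n)%N).
Hypothesis dm : ((d * m) %% n = 1)%N.
Hypothesis S_fixed :
  seq_lshift (Posz d) (flip_at n (Posz alpha) (flip_at n 0 S)) = S.

Let l := ((m * alpha) %% n)%N.

Lemma l_ltn : (l < n)%N. Proof. by rewrite ltn_mod (leq_trans _ alpha_ltn). Qed.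

Lemma alpha_eq_mod : alpha = ((l * d) %% n)%N.
Proof.
apply/esym/eqP; rewrite -[X in _ == X](modn_small alpha_ltn).
by rewrite (eqn_modMr_inv _ dm) ?l_ltn // /l mulnC.
Qed.

Lemma l_gt0 : (0 < l)%N.
Proof.
rewrite lt0n; apply: contraTneq alpha_gt0 => l0.
by rewrite alpha_eq_mod l0 mul0n mod0n.
Qed.

Lemma orbit_step (k : nat) : (k.+1 < n)%N ->
  S (k.+1 * d)%N = if k.+1 == l then sym_flip (S (k * d)%N) else S (k * d)%N.
Proof.
move=> kn; have := congr1 (fun S' => S' (k * d)%N%:Z) S_fixed.
rewrite /seq_lshift -PoszD -mulSnr -[0]/(Posz 0) !flip_at_natE.
rewrite !(eqn_modMr_inv _ dm) // mul0n mod0n /= [(alpha * m)%N]mulnC -/l => <-.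
by case: eqP => _; case: (S _).
Qed.

Lemma orbit_spec (k : nat) : (k < n)%N -> S (k * d)%N = if (k < l)%N then L else R.
Proof.
elim: k => [|k IHk] kn; first by rewrite mul0n S0 l_gt0.
rewrite orbit_step // IHk; last lia.
by case: (ltngtP k.+1 l).
Qed.

End FixedPoint.

Theorem proposition5p1 (n : nat) (S : symseq) (alpha d m : nat) :
  periodic n S -> S 0 = L ->
  (1 <= alpha <= n - 1)%N -> (1 <= d <= n - 1)%N -> coprime d n ->
  seq_lshift (Posz d) (flip_at n (Posz alpha) (flip_at n 0 S)) = S ->
  (m < n)%N -> ((d * m) %% n = 1)%N ->
  let l := ((m * alpha) %% n)%N in
  S = Fseq l m n /\ alpha = ((l * d) %% n)%N.
Proof.
move=> Sper S0 alpha_range _ _ S_fixed _ dm l.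
have alpha_gt0 : (0 < alpha)%N by lia.
have alpha_ltn : (alpha < n)%N by lia.
split; last exact: alpha_eq_mod.
apply: functional_extensionality => i.
have n_gt0 : (0 < n%:Z)%R by lia.
pose k := `|((i * m%:Z) %% n%:Z)%Z|%N.
have k_def : k%:Z = ((i * m%:Z) %% n%:Z)%Z by rewrite gez0_abs // modz_ge0 ?gt_eqF.
have k_ltn : (k < n)%N by rewrite -ltz_nat k_def ltz_pmod.
have -> : S i = S (k * d)%N.
  rewrite (periodic_modz Sper i) (periodic_modz Sper (k * d)%N) PoszM k_def.
  by rewrite modzMml -mulrA -modzMmr -PoszM modz_nat mulnC dm mulr1.
by rewrite (orbit_spec S0 alpha_gt0 alpha_ltn dm S_fixed) // /Fseq -k_def ltz_nat.
Qed.
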